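(* Let $\Phi$ be a randomized learning algorithm that maps a dataset to a feature extractor and is $(\epsilon_{\mathrm{DP}},\delta_{\mathrm{DP}})$-differentially private. For each feature extractor $\phi$, let $A(\cdot,\phi)$ be the algorithm that trains a linear model on the features produced by $\phi$ by minimizing the perturbed loss $L_{\mathbf{b}}$, and let $M$ be a removal mechanism that guarantees $(\epsilon_{\mathrm{CR}},\delta_{\mathrm{CR}})$-certified removal for $A(\cdot,\phi)$. Then the entire procedure (training $\phi=\Phi(\mathcal{D})$, training $A(\mathcal{D},\phi)$, and removing $\mathbf{x}\in\mathcal{D}$ via $M$, compared against $A(\mathcal{D}\setminus\mathbf{x},\Phi(\mathcal{D}\setminus\mathbf{x}))$) guarantees $(\epsilon_{\mathrm{DP}}+\epsilon_{\mathrm{CR}},\delta_{\mathrm{DP}}+\delta_{\mathrm{CR}})$-certified removal.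
   Context: $L_{\mathbf{b}}(\mathbf{w};\mathcal{D})=\sum_{i}\ell(\mathbf{w}^\top\phi(\mathbf{x}_i),y_i)+\frac{\lambda n}{2}\|\mathbf{w}\|_2^2+\mathbf{b}^\top\mathbf{w}$ with random $\mathbf{b}$. A randomized algorithm $\Phi$ is $(\epsilon,\delta)$-differentially private if for all datasets $\mathcal{D},\mathcal{D}''$ differing in one sample and all measurable sets $S$, $P(\Phi(\mathcal{D})\in S)\le e^{\epsilon}P(\Phi(\mathcal{D}'')\in S)+\delta$. For a randomized learning algorithm $A$ with model space $\mathcal{H}$ and a removal mechanism $M(A(\mathcal{D}),\mathcal{D},\mathbf{x})$, $M$ is $(\epsilon,\delta)$-certified removal for $A$ if for all measurable $\mathcal{T}\subseteq\mathcal{H}$, all datasets $\mathcal{D}$ and all $\mathbf{x}\in\mathcal{D}$: $P(M(A(\mathcal{D}),\mathcal{D},\mathbf{x})\in\mathcal{T})\le e^{\epsilon}P(A(\mathcal{D}\setminus\mathbf{x})\in\mathcal{T})+\delta$ and $P(A(\mathcal{D}\setminus\mathbf{x})\in\mathcal{T})\le e^{\epsilon}P(M(A(\mathcal{D}),\mathcal{D},\mathbf{x})\in\mathcal{T})+\delta$. *)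

From HB Require Import structures.
From mathcomp Require Import all_boot all_order all_algebra.
From mathcomp Require Import all_classical all_reals all_analysis.
Set Implicit Arguments. Unset Strict Implicit. Unset Printing Implicit Defensive.
Import Order.TTheory GRing.Theory Num.Theory.
Local Open Scope ring_scope.
Local Open Scope ereal_scope.

(* Datasets are finite sequences of samples of type X.
   D \ x  is  rem x D  (remove one occurrence of x). *)
Definition dremove (X : eqType) (D : seq X) (x : X) : seq X := rem x D.

Definition differ_in_one (X : eqType) (D D'' : seq X) : Prop :=
  exists x, (x \in D /\ perm_eq D'' (rem x D)) \/ (x \in D'' /\ perm_eq D (rem x D'')).

Definition differentially_private (X : eqType) d (F : measurableType d)
    (R : realType) (Phi : seq X -> probability F R) (eps delta : R) : Prop :=
  forall D D'' : seq X, differ_in_one D D'' ->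
  forall S : set F, measurable S ->
    Phi D S <= (expR eps)%:E * Phi D'' S + delta%:E.

(* (eps, delta)-certified removal, stated on output distributions:
   PM D x = distribution of M(A(D), D, x), PA D = distribution of A(D). *)
Definition certified_removal (X : eqType) d (H : measurableType d) (R : realType)
    (PM : seq X -> X -> set H -> \bar R) (PA : seq X -> set H -> \bar R)
    (eps delta : R) : Prop :=
  forall (T : set H), measurable T ->
  forall (D : seq X) (x : X), x \in D ->
    PM D x T <= (expR eps)%:E * PA (dremove D x) T + delta%:E /\
    PA (dremove D x) T <= (expR eps)%:E * PM D x T + delta%:E.

(* For a fixed feature extractor phi:
   A D : R.-pker F ~> H, (A D) phi = distribution of A(D, phi);
   M D x : R.-pker (F * H) ~> H, (M D x) (phi, h) = distribution of the
   removal mechanism applied to model h (trained on features phi), D and x. *)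
Definition A_phi (X : eqType) d d' (F : measurableType d) (H : measurableType d')
    (R : realType) (A : seq X -> R.-pker F ~> H) (phi : F) :
    seq X -> set H -> \bar R := fun D T => A D phi T.

Definition M_phi (X : eqType) d d' (F : measurableType d) (H : measurableType d')
    (R : realType) (A : seq X -> R.-pker F ~> H)
    (M : seq X -> X -> R.-pker (F * H) ~> H) (phi : F) :
    seq X -> X -> set H -> \bar R :=
  fun D x T => \int[A D phi]_h M D x (phi, h) T.

Definition full_removal (X : eqType) d d' (F : measurableType d)
    (H : measurableType d') (R : realType) (Phi : seq X -> probability F R)
    (A : seq X -> R.-pker F ~> H) (M : seq X -> X -> R.-pker (F * H) ~> H) :
    seq X -> X -> set H -> \bar R :=
  fun D x T => \int[Phi D]_phi M_phi A M phi D x T.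

Definition full_train (X : eqType) d d' (F : measurableType d)
    (H : measurableType d') (R : realType) (Phi : seq X -> probability F R)
    (A : seq X -> R.-pker F ~> H) : seq X -> set H -> \bar R :=
  fun D T => \int[Phi D]_phi A D phi T.

From HB Require Import structures.
From mathcomp Require Import all_boot all_order all_algebra.
From mathcomp Require Import all_classical all_reals all_analysis.
From mathcomp Require Import measurable_realfun zify.
Import Order.TTheory GRing.Theory Num.Theory.

(* Write P = Phi(D) and Q = Phi(D \ x). The bound P S <= e^eps_DP Q S + delta_DP
   on measurable sets extends to integrals of measurable [0, 1]-valued
   functions u: the staircase function with N levels, lying between u - 1/N and
   u, integrates to a convex combination of measures of level sets of u.
   Conditionally on the feature extractor phi, certified removal bounds the
   probability g(phi) of an event under removal by e^eps_CR f(phi) + delta_CR,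
   f(phi) being its probability under retraining. As g <= 1, also
   g <= min(1, e^eps_CR f) + delta_CR, and integrating this [0, 1]-valued bound
   against P and Q composes the two guarantees; the converse inequality is
   symmetric. *)

Set Implicit Arguments. Unset Strict Implicit.
Local Open Scope ring_scope.

Lemma sum_ltn_ord (n m : nat) : (\sum_(k < n) (k < m) = minn n m)%N.
Proof. by elim: n => [|n IH]; rewrite ?big_ord0 ?big_ord_recr /= ?IH; lia. Qed.

Local Open Scope classical_set_scope.
Local Open Scope ereal_scope.

Section staircase.
Context d (T : measurableType d) (R : realType).
Variables (u : T -> \bar R) (N : nat).

Definition level_set (k : nat) : set T :=
  [set x | ((k.+1)%:R / N%:R)%:E <= u x].

Definition staircase (x : T) : \bar R :=
  \sum_(k < N) (N%:R^-1)%:E * (\1_(level_set k) x)%:E.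

Lemma measurable_level_set k :
  measurable_fun setT u -> measurable (level_set k).
Proof.
by move=> mu; have := emeasurable_fun_c_infty measurableT mu
  ((k.+1)%:R / N%:R)%:E; rewrite setTI.
Qed.

Lemma staircase_ge0 x : 0 <= staircase x.
Proof. by apply: sume_ge0 => k _; apply: mule_ge0; rewrite lee_fin ?invr_ge0. Qed.

Lemma measurable_staircase : measurable_fun setT u -> measurable_fun setT staircase.
Proof.
move=> mu; apply: emeasurable_sum => k; apply: measurable_funeM.
exact/measurable_EFinP/measurable_indic/measurable_level_set.
Qed.

Hypothesis N_gt0 : (0 < N)%N.

Lemma staircaseE x : 0 <= u x <= 1 ->
  staircase x = (N%:R^-1 * (Num.truncn (N%:R * fine (u x)))%:R)%:E.
Proof.
case/andP => u0 u1.
have ufin : u x \is a fin_num by rewrite ge0_fin_numE // (le_lt_trans u1) ?ltey.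
have N0 : (0 < N%:R :> R)%R by rewrite ltr0n.
set t := (N%:R * fine (u x))%R.
have t_leN : (Num.truncn t <= N)%N.
  rewrite -[N in (_ <= N)%N](@natrK R) le_truncn // /t.
  by rewrite ler_piMr ?ler0n // -lee_fin fineK.
have levelE k : (x \in level_set k) = ((k.+1)%:R <= t)%R.
  have lvl : level_set k x = ((k.+1)%:R <= t)%R :> Prop.
    by rewrite /level_set /= -[u x]fineK // lee_fin ler_pdivrMr // mulrC.
  by apply/idP/idP => [/set_mem|?]; [rewrite -lvl | apply/mem_set; rewrite lvl].
rewrite /staircase; under eq_bigr => k _ do rewrite indicE levelE -truncn_gt_nat -EFinM.
by rewrite sumEFin -mulr_sumr -natr_sum sum_ltn_ord (minn_idPr t_leN).
Qed.

Lemma staircase_le x : 0 <= u x <= 1 ->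
  staircase x <= u x <= staircase x + (N%:R^-1)%:E.
Proof.
move=> u01; rewrite (staircaseE u01); move: u01.
case: (u x) => [r| |] //=; last by case/andP => _; rewrite leNgt ltey.
move=> /andP[r0 _]; rewrite lee_fin in r0.
rewrite -EFinD !lee_fin.
have N0 : (0 < N%:R :> R)%R by rewrite ltr0n.
have /andP[lo hi] := truncn_itv (mulr_ge0 (ler0n R N) r0).
set m := Num.truncn _ in lo hi *.
rewrite -[r](mulKf (lt0r_neq0 N0)) !ler_pM2l ?invr_gt0 // lo /=.
by rewrite -[X in (_ + X)%R]mulr1 -mulrDr ler_pM2l ?invr_gt0 // natr1 ltW.
Qed.
End staircase.

Lemma integral_cst_probability d (T : measurableType d) (R : realType)
  (m : probability T R) (r : R) : \int[m]_x r%:E = r%:E.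
Proof.
by rewrite integral_cst // -[RHS]mule1; congr (_ * _); exact: probability_setT.
Qed.

Section integral_domination.
Context d (T : measurableType d) (R : realType).
Variables (P Q : probability T R) (a del : R).
Hypothesis PQ : forall S, measurable S -> P S <= (expR a)%:E * Q S + del%:E.

Lemma integral_indic_sum_le n (c : 'I_n -> R) (E : 'I_n -> set T) :
  (forall k, 0 <= c k)%R -> (forall k, measurable (E k)) ->
  \int[P]_x (\sum_(k < n) (c k)%:E * (\1_(E k) x)%:E) <=
  (expR a)%:E * \int[Q]_x (\sum_(k < n) (c k)%:E * (\1_(E k) x)%:E) +
  ((\sum_(k < n) c k) * del)%:E.
Proof.
move=> c0 mE.
have intE (m : probability T R) :
    \int[m]_x (\sum_(k < n) (c k)%:E * (\1_(E k) x)%:E) =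
    \sum_(k < n) (c k)%:E * m (E k).
  rewrite ge0_integral_sum //; last 2 first.
  - by move=> k; apply/measurable_funeM/measurable_EFinP/measurable_indic.
  - by move=> k x _; rewrite -EFinM lee_fin mulr_ge0.
  apply: eq_bigr => k _.
  rewrite ge0_integralZl ?lee_fin ?integral_indic ?setIT //.
  exact/measurable_EFinP/measurable_indic.
rewrite !intE ge0_sume_distrr; last by move=> k _; apply: mule_ge0; rewrite ?lee_fin.
rewrite mulr_suml -sumEFin -big_split /=; apply: lee_sum => k _.
rewrite muleCA EFinM -muleDr ?fin_num_adde_defl //.
by rewrite lee_wpmul2l ?lee_fin // PQ.
Qed.

Lemma integral_le_of_unit_valued_approx (u : T -> \bar R) N :
  measurable_fun setT u -> (forall x, 0 <= u x <= 1) -> (0 < N)%N ->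
  \int[P]_x u x <= (expR a)%:E * \int[Q]_x u x + del%:E + (N%:R^-1)%:E.
Proof.
move=> mu u01 N_gt0.
have u0 x : 0 <= u x by have /andP[] := u01 x.
have ms := measurable_staircase N mu.
apply: (@le_trans _ _ (\int[P]_x (staircase u N x + (N%:R^-1)%:E))).
  apply: ge0_le_integral => //; first exact: emeasurable_funD.
  by move=> x _; have /andP[] := staircase_le N_gt0 (u01 x).
rewrite ge0_integralD //; last by move=> x _; exact: staircase_ge0.
rewrite integral_cst_probability leeD2r //.
have sum_weights : (\sum_(k < N) N%:R^-1 = 1 :> R)%R.
  by rewrite sumr_const card_ord -[(N%:R^-1)%R]mulr1 -mulrnAr mulVf // pnatr_eq0 -lt0n.
have w0 : (0 <= N%:R^-1 :> R)%R by rewrite invr_ge0.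
have := @integral_indic_sum_le N (fun=> N%:R^-1)%R (level_set u N) (fun=> w0)
  (fun k => measurable_level_set N k mu).
rewrite sum_weights mul1r => /le_trans; apply.
rewrite leeD2r // lee_wpmul2l ?lee_fin ?expR_ge0 //.
apply: ge0_le_integral => //; first by move=> x _; exact: staircase_ge0.
by move=> x _; have /andP[] := staircase_le N_gt0 (u01 x).
Qed.

Lemma integral_le_of_unit_valued (u : T -> \bar R) :
  measurable_fun setT u -> (forall x, 0 <= u x <= 1) ->
  \int[P]_x u x <= (expR a)%:E * \int[Q]_x u x + del%:E.
Proof.
move=> mu u01; apply/lee_addgt0Pr => e e0.
apply: le_trans (integral_le_of_unit_valued_approx mu u01 (ltn0Sn (Num.truncn e^-1))) _.
by rewrite leeD2l // lee_fin invf_ple ?posrE ?ltr0n // ltW // truncnS_gt.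
Qed.

Lemma integral_le_of_pointwise_bound (g f : T -> \bar R) (b del' : R) :
  measurable_fun setT g -> measurable_fun setT f ->
  (forall x, 0 <= g x <= 1) -> (forall x, 0 <= f x) -> (0 <= del')%R ->
  (forall x, g x <= (expR b)%:E * f x + del'%:E) ->
  \int[P]_x g x <= (expR (a + b))%:E * \int[Q]_x f x + (del + del')%:E.
Proof.
move=> mg mf g01 f0 del'0 gf.
pose v x := mine 1 ((expR b)%:E * f x).
have mv : measurable_fun setT v by apply: measurable_mine => //; exact: measurable_funeM.
have v01 x : 0 <= v x <= 1.
  by rewrite /v le_min lee01 ge_min lexx /= mule_ge0 // lee_fin expR_ge0.
have gv x : g x <= v x + del'%:E.
  rewrite /v /mine; case: ifP => _; last exact: gf.
  by have /andP[_ g1] := g01 x; apply: le_trans g1 _; rewrite leeDl // lee_fin.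
apply: (@le_trans _ _ (\int[P]_x (v x + del'%:E))).
  apply: ge0_le_integral => //; last exact: emeasurable_funD.
  by move=> x _; have /andP[] := g01 x.
rewrite ge0_integralD //; last by move=> x _; have /andP[] := v01 x.
rewrite integral_cst_probability EFinD addeA leeD2r //.
apply: le_trans (integral_le_of_unit_valued mv v01) _; rewrite leeD2r //.
rewrite expRD EFinM -muleA lee_wpmul2l ?lee_fin ?expR_ge0 //.
rewrite -ge0_integralZl ?lee_fin ?expR_ge0 //.
apply: ge0_le_integral => //.
- by move=> x _; have /andP[] := v01 x.
- exact: measurable_funeM.
- by move=> x _; rewrite /v ge_min lexx orbT.
Qed.

End integral_domination.

Lemma sprob_kernel_set_le1 d d' (X : measurableType d) (Y : measurableType d')
  (R : realType) (k : R.-spker X ~> Y) x U : measurable U -> k x U <= 1.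
Proof.
by move=> mU; apply: le_trans (sprob_kernel_le1 k x); apply: le_measure; rewrite ?inE.
Qed.

Lemma kcomp_sprob_le1 d d' d3 (X : measurableType d) (Y : measurableType d')
  (Z : measurableType d3) (R : realType)
  (l : R.-spker X ~> Y) (k : R.-spker (X * Y) ~> Z) x U :
  measurable U -> kcomp l k x U <= 1.
Proof.
move=> mU; apply: le_trans (sprob_kernel_le1 l x).
rewrite -[l x setT]mul1e -integral_cst //.
apply: ge0_le_integral => //.
- exact: measurableT_comp (measurable_kernel k U mU) _.
- by move=> y _; exact: sprob_kernel_set_le1.
Qed.

Local Close Scope ereal_scope.

Theorem theorem5 (R : realType) (X : choiceType)
    (dF dH : measure_display) (F : measurableType dF) (H : measurableType dH)
    (Phi : seq X -> probability F R)
    (A : seq X -> R.-pker F ~> H)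
    (M : seq X -> X -> R.-pker (F * H) ~> H)
    (eps_DP delta_DP eps_CR delta_CR : R) :
  0 <= eps_DP -> 0 <= delta_DP -> 0 <= eps_CR -> 0 <= delta_CR ->
  differentially_private Phi eps_DP delta_DP ->
  (forall phi : F, certified_removal (M_phi A M phi) (A_phi A phi) eps_CR delta_CR) ->
  certified_removal (full_removal Phi A M) (full_train Phi A)
    (eps_DP + eps_CR) (delta_DP + delta_CR).
Proof.
move=> _ _ _ delta_CR0 DP CR T mT D x xD.
have DD' : differ_in_one D (dremove D x) by exists x; left; split => //; exact: perm_refl.
have D'D : differ_in_one (dremove D x) D by exists x; right; split => //; exact: perm_refl.
pose removed phi := M_phi A M phi D x T.
pose retrained phi := A (dremove D x) phi T.
have m_removed : measurable_fun setT removed := measurable_fun_mkcomp_sfinite _ _ mT.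
have m_retrained : measurable_fun setT retrained := measurable_kernel _ T mT.
have removed01 phi : (0 <= removed phi <= 1)%E.
  by rewrite integral_ge0 //= kcomp_sprob_le1.
have retrained01 phi : (0 <= retrained phi <= 1)%E.
  by rewrite measure_ge0 sprob_kernel_set_le1.
have [removed_le retrained_le] : (forall phi,
    removed phi <= (expR eps_CR)%:E * retrained phi + delta_CR%:E)%E /\ (forall phi,
    retrained phi <= (expR eps_CR)%:E * removed phi + delta_CR%:E)%E.
  by split=> phi; have [] := CR phi T mT D x xD.
have removed0 phi : (0 <= removed phi)%E by have /andP[] := removed01 phi.
have retrained0 phi : (0 <= retrained phi)%E by have /andP[] := retrained01 phi.
rewrite /full_removal /full_train; split.
- exact (integral_le_of_pointwise_bound (DP _ _ DD') m_removed m_retrained removed01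
    retrained0 delta_CR0 removed_le).
- exact (integral_le_of_pointwise_bound (DP _ _ D'D) m_retrained m_removed retrained01
    removed0 delta_CR0 retrained_le).
Qed.
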